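(* Let $k_1=2$ and $k_{i+1}=\big(\prod_{j\le i}k_j\big)+1$ (the Sylvester sequence), let $c$ be a positive integer and $\epsilon:=1/\prod_{\ell=1}^c k_\ell$. Define $\vec s\in[0,1]^{c+1}$ by $s_i=\frac{1}{k_i}(1-\frac{\epsilon}{2})$ for $i\in[c]$ and $s_{c+1}=\epsilon(\frac32-\frac{\epsilon}{2})$. Let $\vec\chi\in\mathbb{N}^{c+1}$ satisfy $\vec\chi\cdot\vec s\le 1$. Then: (a) if $\chi_{c+1}=1$ and $\vec\chi\ne\vec 1$, then $\vec\chi\cdot\vec s\le 1-\epsilon/2$; (b) if $\chi_{c+1}=0$, then $\vec\chi\cdot\vec s\le 1-\epsilon/2$; (c) if $\chi_{c+1}=0$ and $\vec\chi\ne k_i\vec e_i$ for every $i\in[c]$, then $\vec\chi\cdot\vec s\le 1-\epsilon$.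
   Context: $\vec 1$ denotes the all-ones vector in $\mathbb{R}^{c+1}$ and $\vec e_i$ the $i$-th standard basis vector. $\vec\chi$ is interpreted as the characteristic vector of a feasibly packed unit bin ($\chi_i$ = number of items of size $s_i$ in it). *)

From mathcomp Require Import all_boot all_order all_algebra.
Set Implicit Arguments. Unset Strict Implicit. Unset Printing Implicit Defensive.
Import Order.TTheory GRing.Theory Num.Theory.

(* Sylvester sequence, 0-indexed: sylv i = k_{i+1} of the paper.
   sylv 0 = 2, sylv (n+1) = (\prod_{j <= n} sylv j) + 1. *)
Fixpoint sylv_aux (n : nat) : nat * nat :=
  (* returns (sylv n, \prod_{j < n} sylv j) *)
  match n with
  | 0 => (2, 1)
  | n'.+1 => let (k, p) := sylv_aux n' in ((p * k).+1, p * k)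
  end.
Definition sylv (n : nat) : nat := (sylv_aux n).1.

Local Open Scope ring_scope.

Definition eps (c : nat) : rat := ((\prod_(l < c) sylv l)%N%:R)^-1.

(* size vector s in Q^{c+1}; index i : 'I_c.+1 with i < c is item i+1 of the
   paper, index c (ord_max) is item c+1. *)
Definition svec (c : nat) (i : 'I_c.+1) : rat :=
  if (i < c)%N then ((sylv i)%:R)^-1 * (1 - eps c / 2)
  else eps c * (3 / 2 - eps c / 2).

Arguments svec : clear implicits.
Definition dots (c : nat) (chi : 'I_c.+1 -> nat) : rat :=
  \sum_(i < c.+1) (chi i)%:R * svec c i.
Arguments dots : clear implicits.
Example sylv_test : [:: sylv 0; sylv 1; sylv 2; sylv 3] = [:: 2; 3; 7; 43]%N.
Proof. by []. Qed.

From mathcomp Require Import all_boot all_order all_algebra.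
From mathcomp Require Import zify ring lra.
Set Implicit Arguments. Unset Strict Implicit. Unset Printing Implicit Defensive.
Import Order.TTheory GRing.Theory Num.Theory.
Local Open Scope ring_scope.

(* Let P := k_1 ... k_c = 1/eps and N := P * \sum_(i <= c) chi_i / k_i, an
   integer.  Multiplying by 2P^2 turns chi.s into (2P - 1) N + (3P - 1) chi_(c+1),
   so feasibility and the three bounds become integer inequalities, which pin N
   down to P or P - 1 in the critical cases.  Since k_(n+1) = k_1 ... k_n + 1,
   peeling off the last term shows that N = P - 1 forces chi_i = 1 for all
   i <= c, and N = P forces chi = k_i e_i for some i. *)

Definition sylv_prod n := (\prod_(l < n) sylv l)%N.

(* The integer [sylv_prod n * \sum_(i < n) f i / sylv i], see [sylv_numE]. *)
Fixpoint sylv_num (f : nat -> nat) n : nat :=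
  if n is n'.+1 then (sylv n' * sylv_num f n' + sylv_prod n' * f n')%N else 0%N.

Lemma sylv_prodS n : sylv_prod n.+1 = (sylv_prod n * sylv n)%N.
Proof. by rewrite /sylv_prod big_ord_recr. Qed.

Lemma sylvE n : sylv n = (sylv_prod n).+1.
Proof.
suff auxE : sylv_aux n = ((sylv_prod n).+1, sylv_prod n) by rewrite /sylv auxE.
elim: n => [|n IHn]; first by rewrite /sylv_prod big_ord0.
by rewrite /= IHn sylv_prodS /sylv IHn.
Qed.

Lemma sylv_prod_gt0 n : (0 < sylv_prod n)%N.
Proof.
elim: n => [|n IHn]; first by rewrite /sylv_prod big_ord0.
by rewrite sylv_prodS muln_gt0 IHn sylvE.
Qed.

Lemma sylv_prod_ge2 n : (0 < n)%N -> (2 <= sylv_prod n)%N.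
Proof.
case: n => // n _; rewrite sylv_prodS sylvE.
have := sylv_prod_gt0 n; nia.
Qed.

Lemma sylv_numE (f : nat -> nat) n :
  (sylv_num f n)%:R = (sylv_prod n)%:R * \sum_(i < n) (f i)%:R / (sylv i)%:R :> rat.
Proof.
elim: n => [|n IHn]; first by rewrite big_ord0 mulr0.
have sylv_neq0 : (sylv n)%:R != 0 :> rat by rewrite pnatr_eq0 sylvE.
by rewrite big_ord_recr /= sylv_prodS natrD !natrM IHn; field.
Qed.

Lemma sylv_num_eq0 (f : nat -> nat) n :
  sylv_num f n = 0%N -> forall i, (i < n)%N -> f i = 0%N.
Proof.
elim: n => [|n IHn] //=; rewrite sylvE => num0 i.
have := sylv_prod_gt0 n => prod_gt0.
have [fn0 numn0] : f n = 0%N /\ sylv_num f n = 0%N by nia.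
by rewrite ltnS leq_eqVlt => /predU1P [-> //|]; apply: IHn.
Qed.

Lemma sylv_num_eq_pred_prod (f : nat -> nat) n :
  (sylv_num f n).+1 = sylv_prod n -> forall i, (i < n)%N -> f i = 1%N.
Proof.
elim: n => [|n IHn] //=; rewrite sylv_prodS sylvE => numE i.
have := sylv_prod_gt0 n => prod_gt0.
have [fn1 numnE] : f n = 1%N /\ (sylv_num f n).+1 = sylv_prod n.
  have : (f n <= sylv_prod n)%N by nia.
  by case: (ltngtP (sylv_num f n + f n) (sylv_prod n)); nia.
by rewrite ltnS leq_eqVlt => /predU1P [-> //|]; apply: IHn.
Qed.

Lemma sylv_num_eq_prod (f : nat -> nat) n : (0 < n)%N ->
  sylv_num f n = sylv_prod n ->
  exists2 i, (i < n)%N & forall j, (j < n)%N -> f j = if j == i then sylv i else 0%N.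
Proof.
elim: n => [|n IHn] //= _; rewrite sylv_prodS sylvE => numE.
have := sylv_prod_gt0 n => prod_gt0.
have : (f n <= (sylv_prod n).+1)%N by nia.
rewrite leq_eqVlt => /predU1P [fn_max|fn_lt].
  have numn0 : sylv_num f n = 0%N by nia.
  exists n => // j; rewrite ltnS leq_eqVlt => /predU1P [->|j_lt].
    by rewrite eqxx sylvE.
  by rewrite (ltn_eqF j_lt); apply: sylv_num_eq0 numn0 _ j_lt.
have [fn0 numnE] : f n = 0%N /\ sylv_num f n = sylv_prod n.
  by case: (ltngtP (sylv_num f n + f n) (sylv_prod n)); nia.
have n_gt0 : (0 < n)%N.
  by case: (posnP n) numnE => [->|//]; rewrite /sylv_prod big_ord0.
have [i i_lt fE] := IHn n_gt0 numnE.
exists i => [|j]; first exact: ltnW.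
rewrite ltnS leq_eqVlt => /predU1P [->|]; last exact: fE.
by rewrite fn0 (gtn_eqF i_lt).
Qed.

Lemma ord_max_ind n (P : 'I_n.+1 -> Prop) :
  P ord_max -> (forall i, (i < n)%N -> P (inord i)) -> forall j, P j.
Proof.
move=> Pmax Pinord j; have [->|j_neq] := eqVneq j ord_max; first exact: Pmax.
rewrite -(inord_val j); apply: Pinord.
rewrite ltn_neqAle -ltnS ltn_ord andbT.
by apply: contra j_neq => /eqP j_n; apply/eqP/val_inj.
Qed.

Section PackedBin.

Variables (c : nat) (chi : 'I_c.+1 -> nat).

Local Notation P := (sylv_prod c).
Local Notation N := (sylv_num (fun i => chi (inord i)) c).
Local Notation x := (chi ord_max).

Lemma dots_scaled :
  (2 * P ^ 2)%:R * dots c chi + (N + x)%:R = (2 * N * P + 3 * x * P)%:R :> rat.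
Proof.
have P_neq0 : P%:R != 0 :> rat by rewrite pnatr_eq0 -lt0n sylv_prod_gt0.
have epsE : eps c = P%:R^-1 by [].
have sum_firstE : \sum_(i < c) (chi (widen_ord (leqnSn c) i))%:R
                                * svec c (widen_ord (leqnSn c) i)
                  = N%:R / P%:R * (1 - eps c / 2).
  rewrite sylv_numE [P%:R * _]mulrC mulfK // mulr_suml; apply: eq_bigr => i _.
  have -> : widen_ord (leqnSn c) i = inord i.
    by apply: val_inj; rewrite /= inordK ?leqW.
  by rewrite /svec inordK ?leqW // ltn_ord mulrA.
rewrite /dots big_ord_recr /= sum_firstE /svec /= ltnn epsE.
by rewrite !natrD !natrM ?natrX; field.
Qed.

Lemma dots_le_1_subE k :
  (dots c chi <= 1 - k%:R * eps c / 2)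
  = (2 * N * P + 3 * x * P + k * P <= 2 * P ^ 2 + N + x)%N.
Proof.
have P_gt0 := sylv_prod_gt0 c.
have P_neq0 : P%:R != 0 :> rat by rewrite pnatr_eq0 -lt0n.
rewrite -(ler_pM2l (_ : 0 < (2 * P ^ 2)%:R :> rat)); last by rewrite ltr0n; nia.
have -> : (2 * P ^ 2)%:R * (1 - k%:R * eps c / 2) = (2 * P ^ 2)%:R - (k * P)%:R :> rat.
  by rewrite /eps -/(sylv_prod c) !natrM ?natrX; field.
rewrite (_ : (2 * P ^ 2)%:R * dots c chi = (2 * N * P + 3 * x * P)%:R - (N + x)%:R).
  by rewrite -(ler_nat rat) !natrD; apply/idP/idP; lra.
by rewrite -dots_scaled addrK.
Qed.

Lemma dots_le1E : (dots c chi <= 1) = (2 * N * P + 3 * x * P <= 2 * P ^ 2 + N + x)%N.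
Proof. by have := dots_le_1_subE 0; rewrite !mul0r subr0 mul0n addn0. Qed.

Hypotheses (c_gt0 : (0 < c)%N) (feasible : dots c chi <= 1).

Lemma sylv_num_le_prod : x = 0%N -> (N <= P)%N.
Proof.
move: feasible; rewrite dots_le1E => + x0; rewrite x0.
have := sylv_prod_ge2 c_gt0; nia.
Qed.

Lemma dots_last1_le :
  x = 1%N -> (exists i, chi i <> 1%N) -> dots c chi <= 1 - eps c / 2.
Proof.
move=> x1 [i chi_i]; have := dots_le_1_subE 1; rewrite mul1r => ->.
move: feasible; rewrite dots_le1E x1 => feasibleN.
have P_ge2 := sylv_prod_ge2 c_gt0.
have [N_eq|N_neq] := eqVneq N.+1 P; last by nia.
have chi1 := sylv_num_eq_pred_prod N_eq.
by exfalso; apply: chi_i; elim/ord_max_ind: i => // i /chi1.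
Qed.

Lemma dots_last0_le : x = 0%N -> dots c chi <= 1 - eps c / 2.
Proof.
move=> x0; have := dots_le_1_subE 1; rewrite mul1r => ->.
have := sylv_num_le_prod x0; rewrite x0; nia.
Qed.

Lemma dots_last0_le_1_sub_eps :
  x = 0%N ->
  (forall i : 'I_c.+1, (i < c)%N ->
     exists j, chi j <> (if j == i then sylv i else 0%N)) ->
  dots c chi <= 1 - eps c.
Proof.
move=> x0 not_single.
have := dots_le_1_subE 2; rewrite mulrAC divff ?pnatr_eq0 // mul1r => ->.
have := sylv_num_le_prod x0; rewrite x0 leq_eqVlt => /predU1P [N_eq|]; last by nia.
have [i i_lt chiE] := sylv_num_eq_prod c_gt0 N_eq.
have [|j chi_j] := not_single (inord i); first by rewrite inordK ?leqW.
exfalso; apply: chi_j; elim/ord_max_ind: j => [|j j_lt].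
  by rewrite x0 -(inj_eq val_inj) /= inordK ?leqW ?(gtn_eqF i_lt).
by rewrite chiE // -(inj_eq val_inj) /= !inordK ?leqW.
Qed.

End PackedBin.

Theorem lemmaD2 (c : nat) (hc : (0 < c)%N) (chi : 'I_c.+1 -> nat)
  (hfeas : dots c chi <= 1) :
  ((chi ord_max = 1%N /\ (exists i, chi i <> 1%N)) -> dots c chi <= 1 - eps c / 2)
  /\ (chi ord_max = 0%N -> dots c chi <= 1 - eps c / 2)
  /\ ((chi ord_max = 0%N /\
       (forall i : 'I_c.+1, (i < c)%N ->
          exists j, chi j <> (if j == i then sylv i else 0%N)))
      -> dots c chi <= 1 - eps c).
Proof.
split; first by case; apply: dots_last1_le.
split; first exact: dots_last0_le.
by case; apply: dots_last0_le_1_sub_eps.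
Qed.
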